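(* Let $\mathcal{X}$ be a separable infinite-dimensional complex Banach space, let $T\in\mathcal{B}(\mathcal{X})$ be a diskcyclic operator with diskcyclic vector $x$, and let $I$ be the identity operator on $\mathbb{C}^2$. Put $S=T\oplus I\in\mathcal{B}(\mathcal{X}\oplus\mathbb{C}^2)$ and $\mathcal{N}=\mathcal{X}\oplus\{0\}$. Then $S$ is not diskcyclic on $\mathcal{X}\oplus\mathbb{C}^2$, but $S$ is $\mathcal{N}$-diskcyclic and $(x,0)$ is an $\mathcal{N}$-diskcyclic vector for $S$.
   Context: $\mathbb{D}=\{\alpha\in\mathbb{C}:|\alpha|\le 1\}$. For $T\in\mathcal{B}(\mathcal{X})$ and $x\in\mathcal{X}$, the disk orbit is $\mathbb{D}\mathrm{Orb}(T,x)=\{\alpha T^nx:\alpha\in\mathbb{D},\ n\in\{0,1,2,\dots\}\}$. $T$ is diskcyclic if $\mathbb{D}\mathrm{Orb}(T,x)$ is dense in $\mathcal{X}$ for some $x$ (a diskcyclic vector). For a closed subspace $\mathcal{M}$ (nontrivial: $\mathcal{M}\ne\{0\}$, $\mathcal{M}\ne$ whole space), $T$ is $\mathcal{M}$-diskcyclic if there is a vector $x$ (an $\mathcal{M}$-diskcyclic vector) such that $\mathbb{D}\mathrm{Orb}(T,x)\cap\mathcal{M}$ is dense in $\mathcal{M}$. *)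

From Stdlib Require Import Reals.
Open Scope R_scope.

Definition C : Type := (R * R)%type.
Definition C0 : C := (0, 0).
Definition C1 : C := (1, 0).
Definition Cadd (a b : C) : C := (fst a + fst b, snd a + snd b).
Definition Cmul (a b : C) : C :=
  (fst a * fst b - snd a * snd b, fst a * snd b + snd a * fst b).
Definition Cmod (a : C) : R := sqrt (fst a * fst a + snd a * snd a).

Record CBanach := {
  carrier :> Type;
  vzero : carrier;
  vadd : carrier -> carrier -> carrier;
  vopp : carrier -> carrier;
  vscal : C -> carrier -> carrier;
  vnorm : carrier -> R;
  vadd_assoc : forall x y z, vadd x (vadd y z) = vadd (vadd x y) z;
  vadd_comm : forall x y, vadd x y = vadd y x;
  vadd_0 : forall x, vadd vzero x = x;
  vadd_opp : forall x, vadd x (vopp x) = vzero;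
  vscal_1 : forall x, vscal C1 x = x;
  vscal_assoc : forall a b x, vscal a (vscal b x) = vscal (Cmul a b) x;
  vscal_distr_v : forall a x y, vscal a (vadd x y) = vadd (vscal a x) (vscal a y);
  vscal_distr_s : forall a b x, vscal (Cadd a b) x = vadd (vscal a x) (vscal b x);
  vnorm_eq0 : forall x, vnorm x = 0 -> x = vzero;
  vnorm_scal : forall a x, vnorm (vscal a x) = Cmod a * vnorm x;
  vnorm_triangle : forall x y, vnorm (vadd x y) <= vnorm x + vnorm y;
  vcomplete : forall u : nat -> carrier,
    (forall eps, 0 < eps -> exists N, forall m n, (N <= m)%nat -> (N <= n)%nat ->
        vnorm (vadd (u m) (vopp (u n))) < eps) ->
    exists l, forall eps, 0 < eps -> exists N, forall n, (N <= n)%nat ->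
        vnorm (vadd (u n) (vopp l)) < eps
}.

Arguments vzero {c}.
Arguments vadd {c}.
Arguments vopp {c}.
Arguments vscal {c}.
Arguments vnorm {c}.

Definition vdist (X : CBanach) (x y : X) : R := vnorm (vadd x (vopp y)).

Definition separable (X : CBanach) : Prop :=
  exists d : nat -> X, forall x eps, 0 < eps -> exists k, vdist X (d k) x < eps.

Fixpoint lincomb (X : CBanach) (c : nat -> C) (v : nat -> X) (n : nat) : X :=
  match n with
  | O => vzero
  | S k => vadd (lincomb X c v k) (vscal (c k) (v k))
  end.

Definition infinite_dimensional (X : CBanach) : Prop :=
  forall n : nat, exists v : nat -> X, forall c : nat -> C,
    lincomb X c v n = vzero -> forall i, (i < n)%nat -> c i = C0.

Definition bounded_operator (X : CBanach) (T : X -> X) : Prop :=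
  (forall x y, T (vadd x y) = vadd (T x) (T y)) /\
  (forall a x, T (vscal a x) = vscal a (T x)) /\
  (exists M, forall x, vnorm (T x) <= M * vnorm x).

Section Generic.
Context {V : Type} (zero : V) (add : V -> V -> V) (scal : C -> V -> V)
        (dist : V -> V -> R).

Definition DOrb (T : V -> V) (x : V) : V -> Prop :=
  fun y => exists (alpha : C) (n : nat), Cmod alpha <= 1 /\ y = scal alpha (Nat.iter n T x).

Definition dense (A : V -> Prop) : Prop :=
  forall v eps, 0 < eps -> exists a, A a /\ dist a v < eps.

Definition is_diskcyclic_vector (T : V -> V) (x : V) : Prop := dense (DOrb T x).

Definition diskcyclic (T : V -> V) : Prop := exists x, is_diskcyclic_vector T x.

Definition closed_subspace (M : V -> Prop) : Prop :=
  M zero /\ (forall u w, M u -> M w -> M (add u w)) /\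
  (forall a u, M u -> M (scal a u)) /\
  (forall v, (forall eps, 0 < eps -> exists a, M a /\ dist a v < eps) -> M v).

Definition nontrivial (M : V -> Prop) : Prop :=
  (exists m, M m /\ m <> zero) /\ (exists v, ~ M v).

Definition is_M_diskcyclic_vector (M : V -> Prop) (T : V -> V) (x : V) : Prop :=
  forall m, M m -> forall eps, 0 < eps ->
    exists y, DOrb T x y /\ M y /\ dist y m < eps.

Definition M_diskcyclic (M : V -> Prop) (T : V -> V) : Prop :=
  closed_subspace M /\ nontrivial M /\ exists x, is_M_diskcyclic_vector M T x.
End Generic.

Definition XC2 (X : CBanach) : Type := (X * (C * C))%type.
Definition sum_zero (X : CBanach) : XC2 X := (vzero, (C0, C0)).
Definition sum_add (X : CBanach) (p q : XC2 X) : XC2 X :=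
  (vadd (fst p) (fst q), (Cadd (fst (snd p)) (fst (snd q)), Cadd (snd (snd p)) (snd (snd q)))).
Definition sum_scal (X : CBanach) (a : C) (p : XC2 X) : XC2 X :=
  (vscal a (fst p), (Cmul a (fst (snd p)), Cmul a (snd (snd p)))).
Definition Csub (a b : C) : C := (fst a - fst b, snd a - snd b).
Definition sum_dist (X : CBanach) (p q : XC2 X) : R :=
  vdist X (fst p) (fst q) + Cmod (Csub (fst (snd p)) (fst (snd q)))
  + Cmod (Csub (snd (snd p)) (snd (snd q))).

Definition Sop (X : CBanach) (T : X -> X) (p : XC2 X) : XC2 X := (T (fst p), snd p).

Definition Nspace (X : CBanach) (p : XC2 X) : Prop := snd p = (C0, C0).

From Pilot Require Import Defs.
From Stdlib Require Import Reals Lra Psatz.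
Open Scope R_scope.

(* The operator S = T (+) I acts as the identity on the C^2
   component, so every point of a disk orbit of S starting at (u, z) has
   C^2 component alpha z with |alpha| <= 1.  These points stay at distance
   at least 1 from the target point (0, (|Re z1| + |Im z1| + 1, 0)), hence no
   disk orbit of S is dense: S is not diskcyclic.  On the other hand the
   orbit of (x, 0) is (T^n x, 0), so its disk orbit lies in N = X (+) {0}
   and is dense there exactly because x is diskcyclic for T.  It remains to
   check that N is a nontrivial closed subspace; nontriviality uses a
   nonzero vector of X, supplied by infinite-dimensionality. *)

Lemma Cmod_ge0 (c : Defs.C) : 0 <= Cmod c.
Proof. apply sqrt_pos. Qed.

Lemma Cmod_fst (c : Defs.C) : Rabs (fst c) <= Cmod c.
Proof.
  unfold Cmod. rewrite <- sqrt_Rsqr_abs. apply sqrt_le_1_alt.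
  unfold Rsqr. nra.
Qed.

Lemma Cmod_snd (c : Defs.C) : Rabs (snd c) <= Cmod c.
Proof.
  unfold Cmod. rewrite <- sqrt_Rsqr_abs. apply sqrt_le_1_alt.
  unfold Rsqr. nra.
Qed.

Lemma Cmod_eq0 (c : Defs.C) : Cmod c = 0 -> c = C0.
Proof.
  destruct c as [a b]; unfold Cmod, C0; simpl; intro H.
  apply sqrt_eq_0 in H; [|nra].
  assert (a = 0) by nra. assert (b = 0) by nra. subst; reflexivity.
Qed.

Lemma Cmod_C0 : Cmod C0 = 0.
Proof.
  unfold Cmod, C0; simpl. replace (0 * 0 + 0 * 0) with 0 by ring. apply sqrt_0.
Qed.

Lemma Cmul_C0 (a : Defs.C) : Cmul a C0 = C0.
Proof. unfold Cmul, C0; simpl. f_equal; ring. Qed.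

Lemma Csub_C0 : Csub C0 C0 = C0.
Proof. unfold Csub, C0; simpl. f_equal; ring. Qed.

Lemma Cmod_small_eq0 (c : Defs.C) :
  (forall eps, 0 < eps -> Cmod (Csub C0 c) < eps) -> c = C0.
Proof.
  intro Hsmall.
  assert (Hmod : Cmod (Csub C0 c) = 0).
  { destruct (Rle_lt_or_eq_dec _ _ (Cmod_ge0 (Csub C0 c))) as [Hlt | Heq]; auto.
    specialize (Hsmall _ Hlt). lra. }
  apply Cmod_eq0 in Hmod. destruct c as [c1 c2]; unfold Csub, C0 in *; simpl in *.
  injection Hmod as H1 H2. f_equal; lra.
Qed.

(* Multiplying by a scalar of the closed unit disk cannot push the real
   part beyond |Re z| + |Im z|; hence alpha z stays at distance >= 1 from
   the real point |Re z| + |Im z| + 1.  This is the obstruction to density. *)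
Lemma disk_multiple_far (alpha z : Defs.C) : Cmod alpha <= 1 ->
  1 <= Cmod (Csub (Cmul alpha z) (Rabs (fst z) + Rabs (snd z) + 1, 0)).
Proof.
  intro Hal.
  pose proof (Cmod_fst alpha). pose proof (Cmod_snd alpha).
  eapply Rle_trans; [| apply Cmod_fst].
  destruct alpha as [a1 a2], z as [x1 y1]; unfold Csub, Cmul; simpl in *.
  assert (E1 : a1 * x1 <= Rabs x1).
  { eapply Rle_trans; [apply Rle_abs|]. rewrite Rabs_mult.
    pose proof (Rabs_pos x1). nra. }
  assert (E2 : - (a2 * y1) <= Rabs y1).
  { eapply Rle_trans; [apply Rle_abs|]. rewrite Rabs_Ropp, Rabs_mult.
    pose proof (Rabs_pos y1). nra. }
  rewrite Rabs_left1; lra.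
Qed.

(* Norms are nonnegative: 0 = ||v - v|| <= ||v|| + ||-v|| = 2 ||v||. *)
Lemma vnorm_ge0 (X : CBanach) (v : X) : 0 <= vnorm v.
Proof.
  assert (H : vnorm (vadd v (vscal (-1, 0) v)) <= vnorm v + vnorm (vscal (-1, 0) v))
    by apply vnorm_triangle.
  rewrite <- (vscal_1 X v) in H at 1.
  rewrite <- vscal_distr_s, !vnorm_scal in H.
  unfold Cadd, Defs.C1, Cmod in H; simpl in H.
  replace ((1 + -1) * (1 + -1) + (0 + 0) * (0 + 0)) with 0 in H by ring.
  replace (-1 * -1 + 0 * 0) with 1 in H by ring.
  rewrite sqrt_0, sqrt_1 in H. lra.
Qed.

Lemma infinite_dimensional_nonzero (X : CBanach) :
  infinite_dimensional X -> exists v : X, v <> vzero.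
Proof.
  intro Hinf. destruct (Hinf 1%nat) as [v Hv]. exists (v O). intro Hz.
  assert (H1 : Defs.C1 = C0).
  { apply (Hv (fun _ => Defs.C1)) with (i := O); [| lia].
    simpl. rewrite Hz, vscal_1, !vadd_0. reflexivity. }
  unfold Defs.C1, C0 in H1. injection H1. lra.
Qed.

Section DirectSum.
Variables (X : CBanach) (T : X -> X).

Lemma iter_Sop (n : nat) (u : X) (z : Defs.C * Defs.C) :
  Nat.iter n (Sop X T) (u, z) = (Nat.iter n T u, z).
Proof. induction n as [| n IH]; simpl; [reflexivity |]. rewrite IH. reflexivity. Qed.

Lemma Sop_not_diskcyclic : ~ diskcyclic (sum_scal X) (sum_dist X) (Sop X T).
Proof.
  intros [[u [z1 z2]] Hdense].
  set (target := (Rabs (fst z1) + Rabs (snd z1) + 1, 0)).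
  destruct (Hdense (vzero, (target, C0)) 1 Rlt_0_1)
    as [p [[alpha [n [Hal ->]]] Hd]].
  rewrite iter_Sop in Hd. unfold sum_dist, sum_scal in Hd; simpl in Hd.
  pose proof (vnorm_ge0 X (vadd (vscal alpha (Nat.iter n T u)) (vopp vzero))).
  pose proof (Cmod_ge0 (Csub (Cmul alpha z2) C0)).
  pose proof (disk_multiple_far alpha z1 Hal).
  unfold vdist in Hd. fold target in H1. lra.
Qed.

Lemma Nspace_closed_subspace :
  closed_subspace (sum_zero X) (sum_add X) (sum_scal X) (sum_dist X) (Nspace X).
Proof.
  unfold closed_subspace, Nspace, sum_zero, sum_add, sum_scal.
  split; [reflexivity | split; [| split]].
  - intros [u [p q]] [w [p' q']]; simpl; intros Hu Hw.
    injection Hu as -> ->; injection Hw as -> ->.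
    unfold Cadd, C0; simpl. f_equal; f_equal; ring.
  - intros a [u [p q]]; simpl; intro Hu; injection Hu as -> ->.
    rewrite Cmul_C0; reflexivity.
  - intros [v [p q]] Hclose; simpl.
    assert (Hpq : forall eps, 0 < eps ->
              Cmod (Csub C0 p) < eps /\ Cmod (Csub C0 q) < eps).
    { intros eps He. destruct (Hclose eps He) as [[a1 [a2 a3]] [Ha Hd]].
      simpl in Ha. injection Ha as -> ->. unfold sum_dist in Hd; simpl in Hd.
      pose proof (vnorm_ge0 X (vadd a1 (vopp v))).
      pose proof (Cmod_ge0 (Csub C0 p)). pose proof (Cmod_ge0 (Csub C0 q)).
      unfold vdist in Hd. split; lra. }
    rewrite (Cmod_small_eq0 p), (Cmod_small_eq0 q); [reflexivity | |];
      intros eps He; apply Hpq, He.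
Qed.

Lemma Nspace_nontrivial (v : X) : v <> vzero ->
  nontrivial (sum_zero X) (Nspace X).
Proof.
  intro Hv; unfold nontrivial, Nspace, sum_zero. split.
  - exists (v, (C0, C0)). split; [reflexivity |]. intro Heq. injection Heq. auto.
  - exists (vzero, (Defs.C1, C0)). intro Heq. injection Heq. unfold Defs.C1, C0. lra.
Qed.

Lemma Nspace_diskcyclic_vector (x : X) :
  is_diskcyclic_vector (@vscal X) (vdist X) T x ->
  is_M_diskcyclic_vector (sum_scal X) (sum_dist X) (Nspace X) (Sop X T) (x, (C0, C0)).
Proof.
  intros Hx [m [m1 m2]] Hm eps Heps. unfold Nspace in Hm; simpl in Hm.
  injection Hm as -> ->.
  destruct (Hx m eps Heps) as [a [[alpha [n [Hal ->]]] Hd]].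
  exists (sum_scal X alpha (Nat.iter n (Sop X T) (x, (C0, C0)))).
  split; [exists alpha, n; auto |].
  rewrite iter_Sop. unfold sum_scal, Nspace, sum_dist; simpl.
  rewrite Cmul_C0, Csub_C0, Cmod_C0. split; [reflexivity | lra].
Qed.

End DirectSum.

Theorem mainTheorem1 (X : CBanach) (Hsep : separable X)
  (Hinf : infinite_dimensional X) (T : X -> X) (HT : bounded_operator X T)
  (x : X) (Hx : is_diskcyclic_vector (@vscal X) (vdist X) T x) :
  ~ diskcyclic (sum_scal X) (sum_dist X) (Sop X T) /\
  M_diskcyclic (sum_zero X) (sum_add X) (sum_scal X) (sum_dist X) (Nspace X) (Sop X T) /\
  is_M_diskcyclic_vector (sum_scal X) (sum_dist X) (Nspace X) (Sop X T) (x, (C0, C0)).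
Proof.
  pose proof (Nspace_diskcyclic_vector X T x Hx) as Hvec.
  destruct (infinite_dimensional_nonzero X Hinf) as [v Hv].
  split; [exact (Sop_not_diskcyclic X T) |].
  split; [| exact Hvec].
  split; [exact (Nspace_closed_subspace X) |].
  split; [exact (Nspace_nontrivial X v Hv) |].
  exists (x, (C0, C0)); exact Hvec.
Qed.
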